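(* Let $G$ be a group, $K$ a subgroup that is a retract of $G$ with retraction $\phi$, and $L,R$ nonempty subsets of $G$. Then $2\mathrm{S}(G;L,R)$ is weakly connected if and only if $2\mathrm{S}(K;\phi(L),\phi(R))$ is weakly connected and any two elements of $\ker\phi$ are weakly connected to each other in $2\mathrm{S}(G;L,R)$.
   Context: For nonempty subsets $L,R$ of a group $G$, the two-sided group digraph $2\mathrm{S}(G;L,R)$ has vertex set $G$ and a directed arc $(g,h)$ if and only if $h=l^{-1}gr$ for some $l\in L$, $r\in R$. Vertex $g$ is weakly connected to $h$ if there is a sequence $g=g_0,\dots,g_n=h$ with, for each $i$, $(g_{i-1},g_i)$ or $(g_i,g_{i-1})$ an arc (the intermediate vertices may be arbitrary elements of $G$); a digraph is weakly connected if every pair of vertices is weakly connected. A subgroup $K$ of $G$ is a retract of $G$ with retraction $\phi$ if $\phi:G\to G$ is a group homomorphism with $\phi(g)\in K$ for all $g\in G$ and $\phi(k)=k$ for all $k\in K$ (equivalently, $G=\ker\phi\rtimes K$). *)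

Set Implicit Arguments.

Record Group := {
  carrier :> Type;
  gmul : carrier -> carrier -> carrier;
  ginv : carrier -> carrier;
  gone : carrier;
  gmulA : forall x y z, gmul x (gmul y z) = gmul (gmul x y) z;
  gmul1 : forall x, gmul gone x = x;
  gmulr1 : forall x, gmul x gone = x;
  gmulV : forall x, gmul (ginv x) x = gone;
  gmulrV : forall x, gmul x (ginv x) = gone
}.

Arguments gmul {G} : rename.
Arguments ginv {G} : rename.
Arguments gone {G} : rename.

Definition is_subgroup {G : Group} (K : G -> Prop) : Prop :=
  K gone /\ (forall x y, K x -> K y -> K (gmul x y)) /\ (forall x, K x -> K (ginv x)).

Definition is_hom {G : Group} (phi : G -> G) : Prop :=
  forall x y, phi (gmul x y) = gmul (phi x) (phi y).

Definition is_retraction {G : Group} (K : G -> Prop) (phi : G -> G) : Prop :=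
  is_hom phi /\ (forall g, K (phi g)) /\ (forall k, K k -> phi k = k).

Definition ker {G : Group} (phi : G -> G) : G -> Prop := fun g => phi g = gone.

Definition image {G : Group} (phi : G -> G) (S : G -> Prop) : G -> Prop :=
  fun k => exists s, S s /\ k = phi s.

Definition nonempty {G : Group} (S : G -> Prop) : Prop := exists x, S x.

Definition arc2S {G : Group} (L R : G -> Prop) (g h : G) : Prop :=
  exists l r, L l /\ R r /\ h = gmul (gmul (ginv l) g) r.

(* Weak connectivity in the digraph 2S with vertex set V (a subgroup of G,
   or all of G): a sequence g = g_0, ..., g_n = h of vertices in V with each
   consecutive pair an arc in one direction or the other. *)
Inductive wconn (G : Group) (V L R : G -> Prop) (g : G) : G -> Prop :=
| wc_refl : V g -> wconn G V L R g g
| wc_fwd h k : wconn G V L R g h -> V k -> arc2S L R h k -> wconn G V L R g k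
| wc_bwd h k : wconn G V L R g h -> V k -> arc2S L R k h -> wconn G V L R g k.
Arguments wconn {G} V L R g _.

Definition weakly_connected {G : Group} (V L R : G -> Prop) : Prop :=
  forall g h, V g -> V h -> wconn V L R g h.

Definition fullset (G : Group) : G -> Prop := fun _ => True.

(* A path in 2S(G;L,R) projects under phi to a path in 2S(K;phi L,phi R), and
   conversely every path in 2S(K;phi L,phi R) starting at phi g lifts to a path
   in 2S(G;L,R) starting at g, since an arc of the image digraph at phi g is the
   image of an arc at g (translate g by the same l, r).  Lifting a
   path from phi g to 1 connects every vertex g to an element of ker phi, so
   connectivity of 2S(G;L,R) reduces to that of ker phi inside it. *)
Set Implicit Arguments.

Section GroupFacts.
Variable G : Group.

Lemma mulgK (a b : G) : gmul (gmul a b) (ginv b) = a.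
Proof. rewrite <- gmulA, gmulrV, gmulr1. reflexivity. Qed.

Lemma mulgVK (a b : G) : gmul (gmul a (ginv b)) b = a.
Proof. rewrite <- gmulA, gmulV, gmulr1. reflexivity. Qed.

Lemma invg_unique (x y : G) : gmul x y = gone -> y = ginv x.
Proof.
  intro Hxy. rewrite <- (gmul1 _ y), <- (gmulV _ x), <- gmulA, Hxy, gmulr1.
  reflexivity.
Qed.

Lemma hom1 (phi : G -> G) : is_hom phi -> phi gone = gone.
Proof.
  intro Hphi. pose proof (Hphi gone gone) as E. rewrite gmul1 in E.
  rewrite <- (mulgK (phi gone) (phi gone)), <- E, gmulrV. reflexivity.
Qed.

Lemma homV (phi : G -> G) (x : G) : is_hom phi -> phi (ginv x) = ginv (phi x).
Proof.
  intro Hphi. apply invg_unique. rewrite <- Hphi, gmulrV. exact (hom1 Hphi).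
Qed.

End GroupFacts.

Section WeakConnectivity.
Variables (G : Group) (V L R : G -> Prop).

Lemma wconn_vertices (g h : G) : wconn V L R g h -> V g /\ V h.
Proof. induction 1; tauto. Qed.

Lemma wconn_trans (g h k : G) :
  wconn V L R g h -> wconn V L R h k -> wconn V L R g k.
Proof.
  intros Wgh Whk. induction Whk.
  - exact Wgh.
  - eapply wc_fwd; eauto.
  - eapply wc_bwd; eauto.
Qed.

Lemma wconn_sym (g h : G) : wconn V L R g h -> wconn V L R h g.
Proof.
  induction 1 as [Vg | h k Wgh IH Vk Ahk | h k Wgh IH Vk Akh].
  - constructor; exact Vg.
  - destruct (wconn_vertices Wgh) as [_ Vh].
    apply wconn_trans with h; [| exact IH].
    eapply wc_bwd; [constructor; exact Vk | exact Vh | exact Ahk].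
  - destruct (wconn_vertices Wgh) as [_ Vh].
    apply wconn_trans with h; [| exact IH].
    eapply wc_fwd; [constructor; exact Vk | exact Vh | exact Akh].
Qed.

End WeakConnectivity.

Section HomomorphicImage.
Variables (G : Group) (phi : G -> G) (L R : G -> Prop).
Hypothesis phi_hom : is_hom phi.

Lemma arc2S_image (g h : G) :
  arc2S L R g h -> arc2S (image phi L) (image phi R) (phi g) (phi h).
Proof.
  intros [l [r [Ll [Rr ->]]]].
  exists (phi l), (phi r); repeat split; [exists l | exists r | ]; auto.
  rewrite !phi_hom, homV by exact phi_hom. reflexivity.
Qed.

Lemma arc2S_lift_fwd (g k : G) :
  arc2S (image phi L) (image phi R) (phi g) k ->
  exists h, phi h = k /\ arc2S L R g h.
Proof.
  intros [l' [r' [[l [Ll ->]] [[r [Rr ->]] ->]]]].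
  exists (gmul (gmul (ginv l) g) r); split.
  - rewrite !phi_hom, homV by exact phi_hom. reflexivity.
  - exists l, r; auto.
Qed.

Lemma arc2S_lift_bwd (g k : G) :
  arc2S (image phi L) (image phi R) k (phi g) ->
  exists h, phi h = k /\ arc2S L R h g.
Proof.
  intros [l' [r' [[l [Ll ->]] [[r [Rr ->]] Ek]]]].
  exists (gmul (gmul l g) (ginv r)); split.
  - rewrite !phi_hom, homV, Ek by exact phi_hom.
    rewrite !gmulA, gmulrV, gmul1, mulgK. reflexivity.
  - exists l, r; repeat split; auto.
    rewrite !gmulA, gmulV, gmul1, mulgVK. reflexivity.
Qed.

Lemma wconn_image {K : G -> Prop} (a b : G) :
  (forall g, K (phi g)) -> wconn (fullset G) L R a b ->
  wconn K (image phi L) (image phi R) (phi a) (phi b).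
Proof.
  intros phiK W. induction W as [_ | h k _ IH _ Ahk | h k _ IH _ Akh].
  - constructor; apply phiK.
  - eapply wc_fwd; [exact IH | apply phiK | exact (arc2S_image Ahk)].
  - eapply wc_bwd; [exact IH | apply phiK | exact (arc2S_image Akh)].
Qed.

Lemma wconn_lift {K : G -> Prop} (g k : G) :
  wconn K (image phi L) (image phi R) (phi g) k ->
  exists h, phi h = k /\ wconn (fullset G) L R g h.
Proof.
  remember (phi g) as k0 eqn:Ek0.
  induction 1 as [_ | h k _ IH _ Ahk | h k _ IH _ Akh].
  - exists g; split; [symmetry; exact Ek0 | constructor; exact I].
  - destruct IH as [g1 [<- W1]].
    destruct (arc2S_lift_fwd Ahk) as [g2 [E2 A12]].
    exists g2; split; [exact E2 | eapply wc_fwd; [exact W1 | exact I | exact A12]].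
  - destruct IH as [g1 [<- W1]].
    destruct (arc2S_lift_bwd Akh) as [g2 [E2 A21]].
    exists g2; split; [exact E2 | eapply wc_bwd; [exact W1 | exact I | exact A21]].
Qed.

End HomomorphicImage.

Lemma wconn_to_ker (G : Group) (K : G -> Prop) (phi : G -> G) (L R : G -> Prop) (g : G) :
  K gone -> is_retraction K phi ->
  weakly_connected K (image phi L) (image phi R) ->
  exists g', ker phi g' /\ wconn (fullset G) L R g g'.
Proof.
  intros K1 [phi_hom [phiK _]] WK.
  exact (wconn_lift phi_hom (WK (phi g) gone (phiK g) K1)).
Qed.

Theorem mainTheorem18 (G : Group) (K : G -> Prop) (phi : G -> G) (L R : G -> Prop) :
  is_subgroup K -> is_retraction K phi -> nonempty L -> nonempty R ->
  (weakly_connected (fullset G) L R <->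
   (weakly_connected K (image phi L) (image phi R) /\
    (forall g h, ker phi g -> ker phi h -> wconn (fullset G) L R g h))).
Proof.
  intros [K1 _] retr _ _. pose proof retr as [phi_hom [phiK phi_id]].
  split.
  - intros W. split.
    + intros a b Ka Kb. rewrite <- (phi_id a Ka), <- (phi_id b Kb).
      exact (wconn_image phi_hom phiK (W a b I I)).
    + intros g h _ _. exact (W g h I I).
  - intros [WK Wker] g h _ _.
    destruct (wconn_to_ker g K1 retr WK) as [g' [Kg' Wg]].
    destruct (wconn_to_ker h K1 retr WK) as [h' [Kh' Wh]].
    apply wconn_trans with g'; [exact Wg |].
    apply wconn_trans with h'; [exact (Wker g' h' Kg' Kh') | exact (wconn_sym Wh)].
Qed.
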